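(* Let $\Phi:(\mathcal{S},g)\to(\mathcal{M},\bar g)$ be an isometric immersion of an $n$-dimensional orientable Riemannian manifold into a semi-Riemannian manifold with co-dimension $k$. Assume that $\dim\mathrm{Im}\,\widetilde h_p$ is constant on $\mathcal{S}$ (equivalently, $\dim\mathscr{U}_p$ is constant on $\mathcal{S}$). Then the shear space $\mathrm{Im}\,\widetilde h$ and the umbilical space $\mathscr{U}$ of $\mathcal{S}$ are well defined, and $$\mathscr{U}=(\mathrm{Im}\,\widetilde h)^\perp,\qquad k-\dim\mathscr{U}=\dim\mathrm{Im}\,\widetilde h.$$
   Context: $g=\Phi^\star\bar g$ is positive definite. $h$ is the second fundamental form, $A_\xi$ the shape operator ($g(A_\xi X,Y)=\bar g(h(X,Y),\xi)$), $H=\frac1n\mathrm{tr}_gh$ the mean curvature vector, and $\widetilde h(X,Y)=h(X,Y)-g(X,Y)H$ the total shear tensor. The shear space at $p$ is $\mathrm{Im}\,\widetilde h_p=\mathrm{span}\{\widetilde h(v,w):v,w\in T_p\mathcal{S}\}$ and the umbilical space at $p$ is $\mathscr{U}_p=\{\xi_p\in T_p\mathcal{S}^\perp:A_{\xi_p}\text{ proportional to the identity}\}$. When these have constant dimension, the shear space of $\mathcal{S}$ is $\mathrm{Im}\,\widetilde h=\bigcup_p\mathrm{Im}\,\widetilde h_p$ (a module over functions on $\mathcal{S}$ of dimension $\dim\mathrm{Im}\,\widetilde h_p$), and the umbilical space of $\mathcal{S}$ is $\mathscr{U}=\{\xi\text{ normal vector field}:A_\xi\text{ proportional to identity}\}$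 (a module of dimension $\dim\mathscr{U}_p$). $(\mathrm{Im}\,\widetilde h)^\perp$ denotes the normal vector fields $\bar g$-orthogonal at each point to $\mathrm{Im}\,\widetilde h_p$. *)

(* Pointwise (linear-algebraic) model of the normal geometry
   of an isometric immersion. *)
From HB Require Import structures.
From mathcomp Require Import all_boot all_order all_algebra.
Set Implicit Arguments. Unset Strict Implicit. Unset Printing Implicit Defensive.
Import Order.TTheory GRing.Theory Num.Theory.
Local Open Scope ring_scope.

Section Immersion.
Variables (R : realFieldType) (n k : nat).
(* At a point: G = Gram matrix of the induced metric g on T_pS ~ R^n
   (row-vector coordinates), B = Gram matrix of bar g on T_pS^perp ~ R^k,
   hc i j = h(e_i, e_j) in T_pS^perp. *)
Variables (G : 'M[R]_n) (B : 'M[R]_k) (hc : 'I_n -> 'I_n -> 'rV[R]_k).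

Definition gform (v w : 'rV[R]_n) : R := (v *m G *m w^T) 0 0.
Definition gbarform (x y : 'rV[R]_k) : R := (x *m B *m y^T) 0 0.
Definition sff (v w : 'rV[R]_n) : 'rV[R]_k :=
  \sum_(i < n) \sum_(j < n) (v 0 i * w 0 j) *: hc i j.
Definition meancurv : 'rV[R]_k :=
  n%:R^-1 *: \sum_(i < n) \sum_(j < n) (invmx G) i j *: hc i j.
Definition shear (v w : 'rV[R]_n) : 'rV[R]_k := sff v w - gform v w *: meancurv.
Definition shear_space : {vspace 'rV[R]_k} :=
  <<[seq shear (delta_mx 0%R i) (delta_mx 0%R j) | i <- enum 'I_n, j <- enum 'I_n]>>%VS.
(* shape operator A_xi : the unique endomorphism with g(A_xi X, Y) = bar g(h(X,Y), xi),
   as a matrix acting on row vectors X |-> X *m A_xi *)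
Definition shape_op (xi : 'rV[R]_k) : 'M[R]_n :=
  (\matrix_(i < n, j < n) gbarform (hc i j) xi) *m invmx G.
Definition umbilical (xi : 'rV[R]_k) : Prop := exists c : R, shape_op xi = c%:M.
Definition orth_to (W : {vspace 'rV[R]_k}) (xi : 'rV[R]_k) : Prop :=
  forall eta, eta \in W -> gbarform eta xi = 0.
End Immersion.

Definition posdef (R : realFieldType) (n : nat) (G : 'M[R]_n) : Prop :=
  G^T = G /\ forall u : 'rV[R]_n, u != 0 -> 0 < (u *m G *m u^T) 0 0.

From HB Require Import structures.
From mathcomp Require Import all_boot all_order all_algebra.
From mathcomp Require Import zify.
Set Implicit Arguments. Unset Strict Implicit. Unset Printing Implicit Defensive.
Import Order.TTheory GRing.Theory Num.Theory.
Local Open Scope ring_scope.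

(* At a point, A_xi = c Id iff the matrix of bar g(h(e_i, e_j), xi) equals c G;
   contracting with G^-1 forces c = bar g(H, xi).  Hence xi is umbilical iff
   bar g(htilde(e_i, e_j), xi) = 0 for all i, j, i.e. xi is orthogonal to the
   shear space.  The dimension count is that of the orthogonal complement of a
   subspace W for the nondegenerate form bar g: it is the kernel of
   xi |-> (bar g(b_i, xi))_i for a basis (b_i) of W, and this map has full rank
   because its kernel meets W B trivially (for x = w B orthogonal to W, the
   Euclidean square x x^T vanishes). *)

Section NormalForm.
Variables (R : realFieldType) (k : nat) (B : 'M[R]_k).

Lemma gbarformD x y xi : gbarform B (x + y) xi = gbarform B x xi + gbarform B y xi.
Proof. by rewrite /gbarform !mulmxDl mxE. Qed.

Lemma gbarformZ a x xi : gbarform B (a *: x) xi = a * gbarform B x xi.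
Proof. by rewrite /gbarform -!scalemxAl mxE. Qed.

Lemma gbarformN x xi : gbarform B (- x) xi = - gbarform B x xi.
Proof. by rewrite -scaleN1r gbarformZ mulN1r. Qed.

Lemma gbarform_suml (I : Type) (r : seq I) (P : pred I) (v : I -> 'rV_k) xi :
  gbarform B (\sum_(i <- r | P i) v i) xi = \sum_(i <- r | P i) gbarform B (v i) xi.
Proof. by rewrite /gbarform !mulmx_suml summxE. Qed.

Lemma orth_spanP (X : seq 'rV[R]_k) xi :
  orth_to B <<X>>%VS xi <-> (forall x, x \in X -> gbarform B x xi = 0).
Proof.
split=> [orthX x Xx | orthX eta]; first exact/orthX/memv_span.
move=> /(@coord_span _ _ _ (in_tuple X)) ->.
rewrite gbarform_suml big1 // => i _.
by rewrite gbarformZ orthX ?mulr0 // mem_nth.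
Qed.

Lemma rV_dot_self_eq0 (x : 'rV[R]_k) : (x *m x^T) 0 0 = 0 -> x = 0.
Proof.
rewrite mxE => /psumr_eq0P x2_0; apply/rowP => l; rewrite mxE.
have /eqP : x 0 l * x^T l 0 = 0 by apply: x2_0 => // i _; rewrite mxE -expr2 sqr_ge0.
by rewrite mxE mulf_eq0 orbb => /eqP.
Qed.

Definition mulmxr_hom (A : 'M[R]_k) : 'End('rV[R]_k) := linfun (mulmxr A).

Section Orthogonal.
Variable W : {vspace 'rV[R]_k}.

Definition orthv_mx : 'M[R]_(k, \dim W) := (\matrix_i (tnth (vbasis W) i *m B))^T.

Definition orthv_map : 'Hom('rV[R]_k, 'rV[R]_(\dim W)) := linfun (mulmxr orthv_mx).

Definition orthv : {vspace 'rV[R]_k} := lker orthv_map.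

Lemma orthv_mxE xi i : (xi *m orthv_mx) 0 i = gbarform B (tnth (vbasis W) i) xi.
Proof.
rewrite /gbarform !mxE; apply: eq_bigr => l _.
by rewrite !mxE mulrC.
Qed.

Lemma mem_orthv xi : xi \in orthv <-> orth_to B W xi.
Proof.
rewrite -[W in orth_to _ W](span_basis (vbasisP W)) memv_ker lfunE /=.
apply: iff_trans (iff_sym (orth_spanP _ _)).
split=> [/eqP/rowP xiW _ /tnthP [i ->] | orthW].
  by have := xiW i; rewrite orthv_mxE mxE.
by apply/eqP/rowP => i; rewrite orthv_mxE orthW ?mem_tnth // mxE.
Qed.

Lemma orthv_capB : (orthv :&: mulmxr_hom B @: W)%VS = 0%VS.
Proof.
apply/eqP; rewrite -subv0; apply/subvP => x /memv_capP [/mem_orthv orthx].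
case/memv_imgP => w Ww; rewrite lfunE /= => def_x.
have := orthx w Ww; rewrite /gbarform -def_x => /rV_dot_self_eq0 ->.
exact: mem0v.
Qed.

Lemma dim_orthv : B \in unitmx -> (k - \dim orthv = \dim W)%N.
Proof.
move=> unitB.
have rank_nullity := limg_ker_dim orthv_map fullv.
have le_img : (\dim (limg orthv_map) <= \dim W)%N.
  by have := dimvS (subvf (limg orthv_map)); rewrite dimvf /dim /= mul1n.
have dim_WB : \dim (mulmxr_hom B @: W) = \dim W.
  apply: limg_dim_eq; apply/eqP; rewrite -subv0; apply/subvP => x /memv_capP [_].
  rewrite memv_ker lfunE /= memv0 => /eqP xB0.
  by rewrite -(mulmxK unitB x) xB0 mul0mx.
have le_sum := dimvS (subvf (orthv + mulmxr_hom B @: W)%VS).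
rewrite dimv_disjoint_sum ?orthv_capB // dim_WB in le_sum.
rewrite capfv dimvf /dim /= mul1n -/orthv in rank_nullity.
rewrite dimvf /dim /= mul1n in le_sum.
(* Abstracting the dimensions merges convertible but syntactically different
   occurrences, which lia would treat as distinct atoms. *)
move: rank_nullity le_img le_sum.
move: (\dim orthv) (\dim (limg orthv_map)) => dimO dimI.
lia.
Qed.

End Orthogonal.
End NormalForm.

Lemma posdef_unitmx (R : realFieldType) (n : nat) (G : 'M[R]_n) :
  posdef G -> G \in unitmx.
Proof.
move=> [_ posG]; rewrite -row_free_unit -kermx_eq0.
apply/negPn/negP => /rowV0Pn [u /sub_kermxP uG u_neq0].
by have := posG u u_neq0; rewrite uG mul0mx mxE ltxx.
Qed.

Section Immersion.
Variables (R : realFieldType) (n k : nat).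
Variables (G : 'M[R]_n) (B : 'M[R]_k) (hc : 'I_n -> 'I_n -> 'rV[R]_k).

Definition sffmx xi : 'M[R]_n := \matrix_(i, j) gbarform B (hc i j) xi.

Lemma gform_delta i j : gform G 'e_i 'e_j = G i j.
Proof. by rewrite /gform -rowE trmx_delta -colE !mxE. Qed.

Lemma sff_delta i j : sff hc 'e_i 'e_j = hc i j.
Proof.
rewrite /sff (bigD1 i) //= [X in _ + X]big1 => [|a neq_ai]; last first.
  by rewrite big1 // => b _; rewrite !mxE (negbTE neq_ai) andbF mul0r scale0r.
rewrite addr0 (bigD1 j) //= [X in _ + X]big1 => [|b neq_bj]; last first.
  by rewrite !mxE (negbTE neq_bj) andbF mulr0 scale0r.
by rewrite !mxE !eqxx mulr1 scale1r addr0.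
Qed.

Lemma gbarform_shear_delta xi i j :
  gbarform B (shear G hc 'e_i 'e_j) xi
    = sffmx xi i j - G i j * gbarform B (meancurv G hc) xi.
Proof. by rewrite /shear gbarformD gbarformN gbarformZ sff_delta gform_delta mxE. Qed.

Lemma gbarform_meancurv xi :
  gbarform B (meancurv G hc) xi = n%:R^-1 * \tr (invmx G *m (sffmx xi)^T).
Proof.
rewrite /meancurv gbarformZ gbarform_suml; congr (_ * _).
apply: eq_bigr => i _; rewrite gbarform_suml !mxE.
by apply: eq_bigr => j _; rewrite gbarformZ !mxE.
Qed.

Hypotheses (symG : G^T = G) (unitG : G \in unitmx).

Lemma shape_op_scalar xi c : shape_op G B hc xi = c%:M <-> sffmx xi = c *: G.
Proof.
rewrite /shape_op -/(sffmx xi); split=> [shape_c | ->].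
  by rewrite -(mulmxKV unitG (sffmx xi)) shape_c mul_scalar_mx.
by rewrite -scalemxAl mulmxV // scalemx1.
Qed.

Lemma gbarform_meancurv_scalar xi c :
  (0 < n)%N -> sffmx xi = c *: G -> gbarform B (meancurv G hc) xi = c.
Proof.
move=> n_gt0 sff_c; rewrite gbarform_meancurv sff_c linearZ /= symG.
rewrite -scalemxAr mulVmx // mxtraceZ mxtrace1 mulrCA mulVf ?mulr1 //.
by rewrite pnatr_eq0 -lt0n.
Qed.

Lemma umbilical_shear_delta xi :
  umbilical G B hc xi <-> forall i j, gbarform B (shear G hc 'e_i 'e_j) xi = 0.
Proof.
split=> [[c /shape_op_scalar sff_c] i j | shear0].
  rewrite gbarform_shear_delta sff_c mxE.
  rewrite (gbarform_meancurv_scalar (leq_ltn_trans _ (ltn_ord i)) sff_c) //.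
  by rewrite mulrC subrr.
exists (gbarform B (meancurv G hc) xi); apply/shape_op_scalar/matrixP => i j.
by rewrite [RHS]mxE mulrC; apply/eqP; rewrite -subr_eq0 -gbarform_shear_delta shear0.
Qed.

Lemma umbilical_orth_shear xi :
  umbilical G B hc xi <-> orth_to B (shear_space G hc) xi.
Proof.
apply: (iff_trans (umbilical_shear_delta xi)).
apply: (iff_trans _ (iff_sym (orth_spanP _ _ _))).
split=> [shear0 _ /allpairsP [[i j] [_ _ ->]] // | orth_shear i j].
by apply/orth_shear/allpairs_f; rewrite mem_enum.
Qed.

End Immersion.

Theorem corollary3p3 (R : realFieldType) (n k : nat) (S : Type)
  (G : S -> 'M[R]_n) (B : S -> 'M[R]_k) (hc : S -> 'I_n -> 'I_n -> 'rV[R]_k)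
  (hG : forall p, posdef (G p))
  (hBsym : forall p, (B p)^T = B p)
  (hBnd : forall p, B p \in unitmx)
  (hsym : forall p i j, hc p i j = hc p j i)
  (hconst : forall p q, \dim (shear_space (G p) (hc p)) = \dim (shear_space (G q) (hc q))) :
  forall p,
    (forall xi, umbilical (G p) (B p) (hc p) xi <->
                orth_to (B p) (shear_space (G p) (hc p)) xi)
    /\ exists U : {vspace 'rV[R]_k},
         (forall xi, xi \in U <-> umbilical (G p) (B p) (hc p) xi)
         /\ (k - \dim U = \dim (shear_space (G p) (hc p)))%N.
Proof.
move=> p; have umbilicalE := umbilical_orth_shear (B p) (hc p)
  (proj1 (hG p)) (posdef_unitmx (hG p)).
split=> //; exists (orthv (B p) (shear_space (G p) (hc p))).
split=> [xi | ]; last exact: dim_orthv.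
exact: iff_trans (mem_orthv _ _ _) (iff_sym (umbilicalE xi)).
Qed.
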